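(* Let $t\geq 1$ be an integer, $m=8t+4$, $n=2^m+1$, and let $\delta_1,\dots,\delta_5$ be defined as follows: $\delta_1=\frac{3n}{17}$; if $t=1$, $\delta_2=\delta_1-6$, $\delta_3=\delta_2-24$, $\delta_4=\delta_3-2$, $\delta_5=\delta_4-38$; if $t=2$, $\delta_2=\delta_1-\frac{\delta_1+45}{128}$, $\delta_3=\delta_2-90$, $\delta_4=\delta_3-6$, $\delta_5=\delta_4-384$; if $t\geq 3$, $\delta_2=\delta_1-\frac{\delta_1+45}{128}$, $\delta_3=\delta_2-90$, $\delta_4=\delta_3-22950$, $\delta_5=\delta_4-90$. If $1\leq x\leq 2^{4t+3}+2^{4t+2}+2^{4t+1}+1$ or $x\in\{\delta_2,\delta_3,\delta_4,\delta_5\}$, then $|C_x|=2m$. Moreover $|C_{\delta_1}|=8$.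
   Context: For $n=2^m+1$ and an integer $x$, the 2-cyclotomic coset of $x$ modulo $n$ is $C_x=\{x\cdot 2^{j} \bmod n : j\geq 0\}\subseteq\{0,1,\dots,n-1\}$, and $|C_x|$ its cardinality. *)

From mathcomp Require Import all_boot.
Set Implicit Arguments. Unset Strict Implicit. Unset Printing Implicit Defensive.

(* The exponents j are
   taken in 0 <= j < n; for odd n this is no restriction, since the
   sequence j |-> x*2^j mod n is periodic with period ord_n(2) <= n - 1. *)
Definition cyc_coset (n x : nat) : seq nat :=
  undup [seq (x * 2 ^ j) %% n | j <- iota 0 n].

Definition cyc_coset_card (n x : nat) : nat := size (cyc_coset n x).

Definition mm (t : nat) : nat := 8 * t + 4.
Definition nn (t : nat) : nat := 2 ^ mm t + 1.

(* delta_1 = 3n/17 (an integer, since 17 | n). *)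
Definition delta1 (t : nat) : nat := 3 * nn t %/ 17.
Definition delta2 (t : nat) : nat :=
  if t == 1 then delta1 t - 6 else delta1 t - (delta1 t + 45) %/ 128.
Definition delta3 (t : nat) : nat :=
  if t == 1 then delta2 t - 24 else delta2 t - 90.
Definition delta4 (t : nat) : nat :=
  if t == 1 then delta3 t - 2 else if t == 2 then delta3 t - 6
  else delta3 t - 22950.
Definition delta5 (t : nat) : nat :=
  if t == 1 then delta4 t - 38 else if t == 2 then delta4 t - 384
  else delta4 t - 90.

From mathcomp Require Import all_boot zify.

Set Implicit Arguments.
Unset Strict Implicit.
Unset Printing Implicit Defensive.

(* Modulo n = 2^m + 1 we have 2^m = -1, so 2^(2m) fixes every x and |C_x| is
   the least p > 0 with x 2^p = x (mod n).  If p < 2m, then g = gcd(p, 2m)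
   fixes x as well; g cannot divide m (that would give x = -x, i.e. n | x), so
   g = 2d with d | m, m/d odd and n | x (2^d + 1).  For m = 4(2t+1) these d are
   4e with e odd and 3e <= 2t+1, and 17 | 2^(4e) + 1 = 17 W.  Small x make
   0 < x (2^(4e) + 1) < n.  Each delta_i equals delta_1 - D - s where
   17 delta_1 = 3n and 2^7 D = delta_1 + 45, so modulo n the product
   2^7 delta_i 17 W is, up to sign, (765 + 2176 s) W, a positive number below n.
   Finally 17 delta_1 = 0 (mod n) makes |C_{delta_1}| the order 8 of 2 mod 17. *)

Lemma eqn_modMr_coprime n c a b : coprime n c ->
  (a * c == b * c %[mod n]) = (a == b %[mod n]).
Proof.
move=> cnc; wlog le_ba : a b / b <= a.
  by move=> W; case: (leqP b a) => [/W //|/ltnW/W]; rewrite eq_sym [RHS]eq_sym.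
by rewrite !eqn_mod_dvd ?leq_mul2r ?le_ba ?orbT // -mulnBl Gauss_dvdl.
Qed.

Lemma congr_modMr n a b c : a = b %[mod n] -> a * c = b * c %[mod n].
Proof. by move=> eq_ab; rewrite -modnMml eq_ab modnMml. Qed.

Section PowerPeriod.
Variables (n a x : nat).

Lemma mul_expnM_mod e k : x * a ^ e = x %[mod n] -> x * a ^ (e * k) = x %[mod n].
Proof.
move=> fix_e; elim: k => [|k IHk]; first by rewrite muln0 muln1.
by rewrite mulnS addnC expnD mulnA (congr_modMr (a ^ e) IHk).
Qed.

Lemma mul_expn_modp p j : x * a ^ p = x %[mod n] ->
  x * a ^ j = x * a ^ (j %% p) %[mod n].
Proof.
move=> fix_p; rewrite {1}(divn_eq j p) expnD mulnA; apply: congr_modMr.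
by rewrite [_ %/ _ * _]mulnC mul_expnM_mod.
Qed.

End PowerPeriod.

Lemma mul_expn_gcd_mod n a x d p : 0 < d -> x * a ^ d = x %[mod n] ->
  x * a ^ p = x %[mod n] -> x * a ^ gcdn d p = x %[mod n].
Proof.
move=> d_gt0 fix_d fix_p; have [b _ /dvdnP[k def_k]] := Bezoutl p d_gt0.
have fix_gp : x * a ^ gcdn d p * a ^ p = x * a ^ gcdn d p %[mod n].
  by rewrite mulnAC (congr_modMr (a ^ gcdn d p) fix_p).
by rewrite -(mul_expnM_mod b fix_gp) -mulnA -expnD [p * b]mulnC def_k [k * d]mulnC
  (mul_expnM_mod k fix_d).
Qed.

Lemma mul_exp2_mod_inj n x p i j : odd n ->
    (forall d, 0 < d < p -> x * 2 ^ d != x %[mod n]) ->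
  i < p -> j < p -> x * 2 ^ i = x * 2 ^ j %[mod n] -> i = j.
Proof.
move=> odd_n min_p; wlog le_ij : i j / i <= j.
  move=> W ip jp eq_ij; case: (leqP i j) => [le_ij|/ltnW le_ji]; first exact: W.
  by apply/esym/W => //; rewrite eq_sym.
move=> _ jp eq_ij; case: (ltngtP i j) le_ij => // lt_ij _.
have /negP[] : x * 2 ^ (j - i) != x %[mod n].
  by rewrite min_p // subn_gt0 lt_ij (leq_ltn_trans (leq_subr i j) jp).
have cop : coprime n (2 ^ i) by rewrite coprimeXr ?coprimen2.
by rewrite -(eqn_modMr_coprime _ _ cop) -mulnA -expnD (subnK (ltnW lt_ij)) eq_ij.
Qed.

Lemma cyc_coset_card_period n x p : odd n -> 0 < p <= n ->
    x * 2 ^ p = x %[mod n] -> (forall d, 0 < d < p -> x * 2 ^ d != x %[mod n]) ->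
  cyc_coset_card n x = p.
Proof.
move=> odd_n /andP[p_gt0 le_pn] fix_p min_p.
rewrite /cyc_coset_card /cyc_coset -[RHS](size_iota 0).
rewrite -[RHS](size_map (fun j => x * 2 ^ j %% n)).
apply: perm_size; apply: uniq_perm; first exact: undup_uniq.
  rewrite map_inj_in_uniq ?iota_uniq // => i j.
  rewrite !mem_iota !add0n => /andP[_ ip] /andP[_ jp].
  exact: mul_exp2_mod_inj odd_n min_p ip jp.
move=> y; rewrite mem_undup; apply/mapP/mapP => -[j]; rewrite !mem_iota !add0n => lt_j ->.
  by exists (j %% p); rewrite ?mem_iota ?add0n ?ltn_mod // (mul_expn_modp _ fix_p).
by exists j; rewrite // mem_iota add0n (leq_trans lt_j le_pn).
Qed.

Section FermatModulus.
Variable m : nat.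
Local Notation N := (2 ^ m + 1).

Lemma mul_exp2_double_mod y : y * 2 ^ (2 * m) = y %[mod N].
Proof.
have -> : y * 2 ^ (2 * m) = y * (2 ^ m - 1) * N + y.
  rewrite mulnC expnM (_ : 2 ^ 2 = 2 * 2) // expnMn.
  by case: (2 ^ m) (expn_gt0 2 m) => // E _; rewrite subn1 /=; nia.
by rewrite modnMDl.
Qed.

(* Since 2^m = -1 mod N, a fixed point of 2^e with e | m satisfies y = -y. *)
Lemma dvdn_fixed_exp2_divisor e y : 0 < m -> e %| m ->
  y * 2 ^ e = y %[mod N] -> N %| y.
Proof.
move=> m_gt0 /dvdnP[k def_m] fix_e; have fix_m := mul_expnM_mod k fix_e.
rewrite [e * k]mulnC -def_m in fix_m.
have cop : coprime N 2 by rewrite coprimen2 oddD oddX eqn0Ngt m_gt0.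
rewrite -(Gauss_dvdl y cop) /dvdn muln2 -addnn -modnDml -fix_m modnDml.
by rewrite -{2}[y]muln1 -mulnDr modnMl.
Qed.

Lemma dvdn_double_halve g k : g %| 2 * k -> ~~ (g %| k) ->
  exists2 h, g = 2 * h & h %| k.
Proof.
move=> g_dvd g_ndvd; have even_g : ~~ odd g.
  by apply: contra g_ndvd => odd_g; rewrite -(Gauss_dvdr k (_ : coprime g 2)) ?coprimen2.
exists g./2; first by rewrite -{1}(odd_double_half g) (negbTE even_g) -mul2n.
by move: g_dvd; rewrite -{1}(odd_double_half g) (negbTE even_g) -mul2n dvdn_pmul2l.
Qed.

Lemma cyc_coset_card_full x : 0 < m ->
    (forall d, d %| m -> ~~ (2 * d %| m) -> d < m -> ~~ (N %| x * (2 ^ d + 1))) ->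
  ~~ (N %| x) -> cyc_coset_card N x = 2 * m.
Proof.
move=> m_gt0 no_half x_ndvd.
apply: cyc_coset_card_period; first by rewrite oddD oddX eqn0Ngt m_gt0.
- rewrite muln_gt0 m_gt0 -(prednK m_gt0) expnS.
  have := ltn_expl m.-1 (isT : 1 < 2); lia.
- exact: mul_exp2_double_mod.
move=> d /andP[d_gt0 lt_d]; apply/negP => /eqP fix_d.
set g := gcdn d (2 * m).
have fix_g : x * 2 ^ g = x %[mod N].
  exact: mul_expn_gcd_mod d_gt0 fix_d (mul_exp2_double_mod x).
have lt_g : g < 2 * m by rewrite (leq_ltn_trans (dvdn_leq d_gt0 (dvdn_gcdl _ _))).
have [g_dvd|g_ndvd] := boolP (g %| m).
  by rewrite (dvdn_fixed_exp2_divisor m_gt0 g_dvd fix_g) in x_ndvd.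
have [h def_g h_dvd] := dvdn_double_halve (dvdn_gcdr _ _) g_ndvd.
have /negP[] : ~~ (N %| x * (2 ^ h + 1)).
  by apply: no_half h_dvd _ _; [rewrite -def_g | lia].
apply: dvdn_fixed_exp2_divisor m_gt0 h_dvd _.
rewrite -mulnA mulnDl mul1n -expnD addnn -mul2n -def_g mulnDr -modnDml fix_g.
by rewrite modnDml mulnDr muln1 addnC.
Qed.

End FermatModulus.

Lemma dvdn17_exp2_4odd e : odd e -> 17 %| 2 ^ (4 * e) + 1.
Proof.
move=> odd_e; rewrite -(odd_double_half e) odd_e -mul2n mulnDr muln1 mulnA expnD.
rewrite expnM /dvdn -modnDml -modnMmr -modnXm (_ : 2 ^ (4 * 2) %% 17 = 1) //.
by rewrite exp1n.
Qed.

Lemma dvdn17_nn t : 17 %| nn t.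
Proof.
have mmE : 4 * (2 * t + 1) = mm t by rewrite /mm; lia.
by rewrite /nn -mmE dvdn17_exp2_4odd // oddD oddM.
Qed.

Lemma divisor_odd_cofactor q d : odd q -> d %| 4 * q -> ~~ (2 * d %| 4 * q) ->
  d < 4 * q -> exists2 e, d = 4 * e & odd e && (3 * e <= q).
Proof.
move=> odd_q /dvdnP[k def_q] d_ndvd lt_d.
have odd_k : odd k.
  apply: contraR d_ndvd => even_k; apply/dvdnP; exists k./2.
  by rewrite def_q -{1}(odd_double_half k) (negbTE even_k) -mul2n mulnCA mulnA.
have /dvdnP[e def_d] : 4 %| d.
  by rewrite -(@Gauss_dvdr _ k) -?def_q ?dvdn_mulr // (@coprime_pexpl 2 2) ?coprime2n.
exists e; first by rewrite def_d mulnC.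
have def_ek : q = e * k by lia.
apply/andP; split; first by move: odd_q; rewrite def_ek oddM => /andP[].
have k_gt2 : 2 < k.
  have : 1 < k by rewrite def_q def_d in lt_d; nia.
  lia.
by rewrite def_ek mulnC leq_mul2l k_gt2 orbT.
Qed.

Lemma cyc_coset_card_full_nn t x : 1 <= t ->
    (forall e, odd e -> 12 * e <= mm t -> ~~ (nn t %| x * (2 ^ (4 * e) + 1))) ->
  cyc_coset_card (nn t) x = 2 * mm t.
Proof.
move=> t_gt0 no_fixed; have mmE : mm t = 4 * (2 * t + 1) by rewrite /mm; lia.
apply: cyc_coset_card_full; first by rewrite /mm addn4.
  move=> d d_dvd d_ndvd lt_d; rewrite mmE in d_dvd d_ndvd lt_d.
  have odd_q : odd (2 * t + 1) by rewrite oddD oddM.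
  have [e -> /andP[odd_e le_e]] := divisor_odd_cofactor odd_q d_dvd d_ndvd lt_d.
  by apply: no_fixed => //; rewrite mmE; lia.
have le_12 : 12 * 1 <= mm t by rewrite /mm; lia.
by apply: contraNN (no_fixed 1 isT le_12); apply: dvdn_mulr.
Qed.

Lemma small_mul_lt A E x : 32 <= A -> 2 * E <= A -> x <= 7 * A + 1 ->
  x * (E + 1) < 4 * A * A + 1.
Proof.
move=> A_ge E_le x_le.
have : x * (E + 1) <= (7 * A + 1) * (E + 1) by rewrite leq_mul2r x_le orbT.
nia.
Qed.

Lemma cyc_coset_card_small t x : 1 <= t ->
    1 <= x <= 2 ^ (4 * t + 3) + 2 ^ (4 * t + 2) + 2 ^ (4 * t + 1) + 1 ->
  cyc_coset_card (nn t) x = 2 * mm t.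
Proof.
move=> t_gt0 /andP[x_gt0 le_x]; apply: cyc_coset_card_full_nn => // e odd_e le_e.
set A := 2 ^ (4 * t + 1).
have nnE : nn t = 4 * A * A + 1.
  by rewrite /nn /A (_ : 4 = 2 ^ 2) // -!expnD /mm; congr (2 ^ _ + 1); lia.
have x_le : x <= 7 * A + 1 by move: le_x; rewrite /A !expnD; lia.
have A_ge : 32 <= A by rewrite /A (_ : 32 = 2 ^ 5) // leq_pexp2l //; lia.
have E_le : 2 * 2 ^ (4 * e) <= A.
  by rewrite /A -expnS leq_pexp2l //; move: le_e; rewrite /mm; lia.
have lt_n : x * (2 ^ (4 * e) + 1) < nn t by rewrite nnE small_mul_lt.
by rewrite gtnNdvd // muln_gt0 x_gt0 addn1.
Qed.

Lemma delta1_mul17 t : 17 * delta1 t = 3 * nn t.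
Proof.
by rewrite /delta1 -muln_divA ?dvdn17_nn // mulnCA [17 * _]mulnC divnK ?dvdn17_nn.
Qed.

Lemma dvdn128_delta1_add45 t : 1 <= t -> 128 %| delta1 t + 45.
Proof.
move=> t_gt0; rewrite -(@Gauss_dvdr _ 17) // mulnDr delta1_mul17.
have -> : 3 * nn t + 17 * 45 = 3 * (2 ^ mm t + 2 ^ 8) by rewrite /nn; lia.
rewrite dvdn_mull // dvdn_add // (_ : 128 = 2 ^ 7) // dvdn_exp2l //.
by rewrite /mm; lia.
Qed.

Lemma ndvdn_mul_shift n x D c u X W : n %| (x + D) * c ->
  u * (D * c) = X %[mod n] -> 0 < X * W < n -> ~~ (n %| x * (c * W)).
Proof.
move=> dvd_xD uDc /andP[XW_gt0 lt_XW]; apply/negP => dvd_x.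
have dvd_D : n %| D * (c * W).
  by rewrite -(dvdn_addr _ dvd_x) -mulnDl mulnA dvdn_mulr.
have reassoc : u * (D * (c * W)) = u * (D * c) * W by rewrite !mulnA.
have := dvdn_mull u dvd_D; rewrite reassoc.
by rewrite /dvdn -modnMml uDc modnMml -/(dvdn _ _) gtnNdvd.
Qed.

Lemma mul_cofactor_lt e m X W : 0 < e -> 4 * e <= m -> 17 * W = 2 ^ (4 * e) + 1 ->
  X < 2 ^ (m + 4 - 4 * e) -> X * W < 2 ^ m.
Proof.
move=> e_gt0 le_em def_W lt_X.
have le_W : W <= 2 ^ (4 * e - 4).
  have : 2 ^ (4 * e) = 2 ^ 4 * 2 ^ (4 * e - 4) by rewrite -expnD subnKC //; lia.
  by have := expn_gt0 2 (4 * e - 4); lia.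
have -> : 2 ^ m = 2 ^ (m + 4 - 4 * e) * 2 ^ (4 * e - 4).
  by rewrite -expnD; congr (2 ^ _); lia.
by rewrite (leq_ltn_trans (leq_mul (leqnn X) le_W)) // ltn_mul2r expn_gt0.
Qed.

Definition delta_shifts t : seq nat :=
  if t == 2 then [:: 0; 90; 96; 480] else [:: 0; 90; 90 * 256; 90 * 257].

Lemma deltas_shift t : 2 <= t ->
  [:: delta2 t; delta3 t; delta4 t; delta5 t] =
  [seq delta1 t - (delta1 t + 45) %/ 128 - s | s <- delta_shifts t].
Proof.
move=> t_ge2; have t_ne1 : (t == 1) = false by apply/eqP; lia.
rewrite /delta5 /delta4 /delta3 /delta2 /delta_shifts t_ne1.
by case: (t == 2); rewrite /= subn0 -!subnDA -!addnA.
Qed.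

Lemma delta_shift_lt t e s : 2 <= t -> odd e -> 12 * e <= mm t ->
  s \in delta_shifts t -> 765 + 2176 * s < 2 ^ (mm t + 4 - 4 * e).
Proof.
rewrite /delta_shifts => t_ge2 odd_e le_e; case: eqP => [t2 | t_ne2] s_in.
  apply: leq_trans (_ : 2 ^ 10 * 2 ^ 10 <= _).
    by rewrite (_ : 2 ^ 10 = 1024) //; move: s_in; rewrite !inE => /or4P[] /eqP->; lia.
  by rewrite -expnD leq_pexp2l //; move: le_e; rewrite /mm; lia.
apply: leq_trans (_ : 2 ^ 14 * 2 ^ 14 <= _).
  by rewrite (_ : 2 ^ 14 = 128 * 128) //; move: s_in; rewrite !inE => /or4P[] /eqP->; lia.
by rewrite -expnD leq_pexp2l //; move: le_e; rewrite /mm; lia.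
Qed.

Lemma cyc_coset_card_delta_shift (t s : nat) : 2 <= t -> s \in delta_shifts t ->
  cyc_coset_card (nn t) (delta1 t - (delta1 t + 45) %/ 128 - s) = 2 * mm t.
Proof.
move=> t_ge2 s_in; apply: cyc_coset_card_full_nn => [|e odd_e le_e]; first lia.
have [W def_W] : exists W, 17 * W = 2 ^ (4 * e) + 1.
  by have /dvdnP[W ->] := dvdn17_exp2_4odd odd_e; exists W; rewrite mulnC.
set D := (delta1 t + 45) %/ 128.
have def_D : 128 * D = delta1 t + 45.
  by rewrite mulnC divnK ?dvdn128_delta1_add45 //; lia.
have big_nn : 2 ^ 10 * 2 ^ 10 <= 2 ^ mm t.
  by rewrite -expnD leq_pexp2l //; rewrite /mm; lia.
have s_le : s <= 90 * 257.
  by move: s_in; rewrite /delta_shifts; case: ifP => _; rewrite !inE => /or4P[] /eqP->.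
have le_Ds : D + s <= delta1 t.
  have := delta1_mul17 t; move: big_nn; rewrite /nn (_ : 2 ^ 10 = 1024) //; lia.
have lt_XW : (765 + 2176 * s) * W < 2 ^ mm t.
  by apply: mul_cofactor_lt def_W (delta_shift_lt t_ge2 odd_e le_e s_in); lia.
rewrite -def_W (@ndvdn_mul_shift _ _ (D + s) 17 128 (765 + 2176 * s)) //.
- by rewrite -subnDA subnK // mulnC delta1_mul17 dvdn_mull.
- have -> : 128 * ((D + s) * 17) = 3 * nn t + (765 + 2176 * s).
    by rewrite -delta1_mul17; lia.
  by rewrite modnMDl.
by rewrite /nn; lia.
Qed.

Lemma cyc_coset_card_deltas_t1 x :
    x \in [:: delta2 1; delta3 1; delta4 1; delta5 1] ->
  cyc_coset_card (nn 1) x = 2 * mm 1.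
Proof.
move=> x_in; apply: cyc_coset_card_full_nn => // e odd_e; rewrite /mm => le_e.
have -> : e = 1 by lia.
by move: x_in; rewrite !inE => /or4P[] /eqP->.
Qed.

Lemma cyc_coset_card_delta1 t : cyc_coset_card (nn t) (delta1 t) = 8.
Proof.
have /dvdnP[N def_n] := dvdn17_nn t; rewrite mulnC in def_n.
have def_d : delta1 t = 3 * N by rewrite /delta1 def_n mulnCA mulKn.
have N_gt0 : 0 < N by move: def_n; rewrite /nn; lia.
rewrite def_d def_n; apply: cyc_coset_card_period.
- by rewrite -def_n /nn oddD oddX /mm addn4.
- lia.
- have -> : 3 * N * 2 ^ 8 = 45 * (17 * N) + 3 * N by rewrite (_ : 2 ^ 8 = 256) //; lia.
  by rewrite modnMDl.
move=> d /andP[d_gt0 lt_d8].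
rewrite eqn_mod_dvd; last by rewrite leq_pmulr // expn_gt0.
rewrite -{2}[3 * N]muln1 -mulnBr mulnAC dvdn_pmul2r //.
by case: d d_gt0 lt_d8 => [|[|[|[|[|[|[|[|d]]]]]]]].
Qed.

Theorem lemma5p3 (t : nat) (ht : 1 <= t) :
  (forall x : nat,
     (1 <= x <= 2 ^ (4 * t + 3) + 2 ^ (4 * t + 2) + 2 ^ (4 * t + 1) + 1)
     \/ x \in [:: delta2 t; delta3 t; delta4 t; delta5 t] ->
     cyc_coset_card (nn t) x = 2 * mm t)
  /\ cyc_coset_card (nn t) (delta1 t) = 8.
Proof.
split; last exact: cyc_coset_card_delta1.
move=> x [x_small | x_delta]; first exact: cyc_coset_card_small.
have [t1 | t_ge2] : t = 1 \/ 2 <= t by lia.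
  by rewrite t1 in x_delta *; apply: cyc_coset_card_deltas_t1.
move: x_delta; rewrite deltas_shift // => /mapP[s s_in ->].
exact: cyc_coset_card_delta_shift.
Qed.
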